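(* Let $p$ be a positive stochastic choice function on a finite set $X$ such that there exist $a,b,c\in X$ with $a\not\sim_p b$, $b\not\sim_p c$, $a\not\sim_p c$. Then $p$ satisfies ISA-1 and ISA-2 if and only if $p$ is a strict nondegenerate NSC.
   Context: $\mathscr{A}$ is the collection of nonempty subsets of $X$; $p(x,A)=0$ for $x\notin A$, $\sum_{a\in A}p(a,A)=1$, $p(a,A)>0$ for $a\in A$; $A\cup x=A\cup\{x\}$. $a\sim_p b$ means $\frac{p(a,A)}{p(b,A)}=\frac{p(a,\{a,b\})}{p(b,\{a,b\})}$ for all $A\ni a,b$. ISA-1: for any $A\in\mathscr{A}$, $a,b\in A$, $x\notin A$: if $\frac{p(a,\{a,x\})}{p(x,\{a,x\})}=\frac{p(a,\{a,b,x\})}{p(x,\{a,b,x\})}$ and $\frac{p(b,\{b,x\})}{p(x,\{b,x\})}=\frac{p(b,\{a,b,x\})}{p(x,\{a,b,x\})}$, then $\frac{p(a,A)}{p(b,A)}=\frac{p(a,A\cup x)}{p(b,A\cup x)}$. ISA-2: for any $A,B,C\in\mathscr{A}$, $a\in A\cap B$, $b\in A\cap C$, $x\in B\cap C$: if $\frac{p(a,\{a,x\})}{p(x,\{a,x\})}\ne\frac{p(a,B)}{p(x,B)}$ and $\frac{p(b,\{b,x\})}{p(x,\{b,x\})}\ne\frac{p(b,C)}{p(x,C)}$, then $\frac{p(a,A)}{p(b,A)}=\frac{p(a,A\cup x)}{p(b,A\cup x)}$. NSC: there exist a partition $X_1,\dots,X_K$ of $X$, $u:X\to\mathbb{R}_{++}$,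 $v:\bigcup_i2^{X_i}\to\mathbb{R}_+$, $v(\emptyset)=0$, with $p(a,A)=\frac{v(A\cap X_i)}{\sum_j v(A\cap X_j)}\frac{u(a)}{\sum_{b\in A\cap X_i}u(b)}$ for $a\in A\cap X_i$. Nondegenerate: at most one $i$ for which some $a\in X_i$ satisfies $\frac{\sum_{x\in A_i}u(x)}{v(A_i)}=\frac{u(a)}{v(\{a\})}$ for all $A_i\subseteq X_i$ containing $a$. Strict: for every $i$, every $A_i\subseteq X_i$, $a\in A_i$ and $x\in X_i\setminus A_i$, if $\frac{u(a)+u(x)}{u(x)}=\frac{v(\{a,x\})}{v(\{x\})}$ then $\frac{\sum_{a'\in A_i}u(a')+u(x)}{\sum_{a'\in A_i}u(a')}=\frac{v(A_i\cup x)}{v(A_i)}$. *)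

From HB Require Import structures.
From mathcomp Require Import all_boot all_order all_algebra.
From mathcomp Require Import reals.
Set Implicit Arguments. Unset Strict Implicit. Unset Printing Implicit Defensive.
Import Order.TTheory GRing.Theory Num.Theory.
Local Open Scope ring_scope.

Section SCF.
Variables (R : realType) (T : finType).
Implicit Types (p : T -> {set T} -> R) (u : T -> R) (v : {set T} -> R)
  (P : {set {set T}}).

Definition positive_scf p : Prop :=
  forall A : {set T}, A != set0 ->
    (forall x, x \notin A -> p x A = 0) /\
    \sum_(a in A) p a A = 1 /\
    (forall a, a \in A -> 0 < p a A).

Definition simp p (a b : T) : Prop :=
  forall A : {set T}, A != set0 -> a \in A -> b \in A ->
    p a A / p b A = p a [set a; b] / p b [set a; b].

Definition ISA1 p : Prop :=
  forall (A : {set T}) (a b x : T),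
    A != set0 -> a \in A -> b \in A -> x \notin A ->
    p a [set a; x] / p x [set a; x] = p a [set a; b; x] / p x [set a; b; x] ->
    p b [set b; x] / p x [set b; x] = p b [set a; b; x] / p x [set a; b; x] ->
    p a A / p b A = p a (x |: A) / p b (x |: A).

Definition ISA2 p : Prop :=
  forall (A B C : {set T}) (a b x : T),
    A != set0 -> B != set0 -> C != set0 ->
    a \in A :&: B -> b \in A :&: C -> x \in B :&: C ->
    p a [set a; x] / p x [set a; x] <> p a B / p x B ->
    p b [set b; x] / p x [set b; x] <> p b C / p x C ->
    p a A / p b A = p a (x |: A) / p b (x |: A).

(* (P, u, v) is an NSC representation of p: P is a partition of T
   (blocks X_i), u > 0, v >= 0 on subsets of blocks (v only matters there),
   v(empty) = 0, and the nested formula holds. *)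
Definition NSC_rep p P u v : Prop :=
  partition P [set: T] /\
  (forall a, 0 < u a) /\
  v set0 = 0 /\
  (forall S : {set T}, (exists2 Xi, Xi \in P & S \subset Xi) -> 0 <= v S) /\
  (forall A : {set T}, A != set0 ->
     forall Xi, Xi \in P -> forall a, a \in A :&: Xi ->
       p a A = v (A :&: Xi) / (\sum_(Xj in P) v (A :&: Xj))
               * (u a / \sum_(b in A :&: Xi) u b)).

Definition degenerate_block u v (Xi : {set T}) : Prop :=
  exists2 a, a \in Xi &
    forall Ai : {set T}, Ai \subset Xi -> a \in Ai ->
      (\sum_(x in Ai) u x) / v Ai = u a / v [set a].

Definition nondegenerate P u v : Prop :=
  forall Xi Xj, Xi \in P -> Xj \in P ->
    degenerate_block u v Xi -> degenerate_block u v Xj -> Xi = Xj.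

Definition strict_rep P u v : Prop :=
  forall Xi, Xi \in P -> forall Ai : {set T}, Ai \subset Xi ->
    forall a x, a \in Ai -> x \in Xi :\: Ai ->
      (u a + u x) / u x = v [set a; x] / v [set x] ->
      (\sum_(a' in Ai) u a' + u x) / (\sum_(a' in Ai) u a')
        = v (x |: Ai) / v Ai.

Definition strict_nondeg_NSC p : Prop :=
  exists P u v, NSC_rep p P u v /\ nondegenerate P u v /\ strict_rep P u v.

End SCF.

(* If p satisfies ISA1 and ISA2, then ~_p is an equivalence relation
   (ISA1 adds the middle element in the proof of transitivity), and by ISA2
   adding an alternative related to neither a nor b does not change the odds
   of a against b.  Hence these odds only depend on the menu's intersections
   with the classes of a and b.  The classes form the partition, u(a) is the
   probability of a in its own class, and v(S), for S inside a class, is read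
   off the odds of the members of S against an alternative e of another class;
   the existence of three classes provides such an e for every pair a, b, and
   the comparison of a and b through e gives the nested formula.  Strictness is
   ISA1 applied to a subset of a block padded with an element of another block,
   and two degenerate blocks would contain related alternatives.
   Conversely, in an NSC the odds of alternatives from different blocks are
   ratios of block masses: a foreign alternative leaves them unchanged (ISA2),
   and strictness is exactly what makes the mass of a block insensitive to the
   addition of x in ISA1. *)

From Pilot Require Import Defs.
From HB Require Import structures.
From mathcomp Require Import all_boot all_order all_algebra.
From mathcomp Require Import reals.
From mathcomp Require Import ring.
Set Implicit Arguments. Unset Strict Implicit. Unset Printing Implicit Defensive.
Import Order.TTheory GRing.Theory Num.Theory.
Local Open Scope ring_scope.

Ltac finset_cases := apply/setP => ?; rewrite !inE;
  repeat (rewrite ?eqxx /=;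
          match goal with |- context [?y == ?z] => case: (eqVneq y z) => [->|?] end).

Lemma setIU1_out (T : finType) (x : T) (X A : {set T}) :
  x \notin X -> (x |: A) :&: X = A :&: X.
Proof.
move=> xX; apply/setP=> y; rewrite !inE; case: (eqVneq y x) => [->|] //=.
by rewrite (negbTE xX) andbF.
Qed.

Lemma setIU1_in (T : finType) (x : T) (X A : {set T}) :
  x \in X -> (x |: A) :&: X = x |: (A :&: X).
Proof. by move=> xX; apply/setP=> y; rewrite !inE; case: (eqVneq y x) => [->|]. Qed.

Lemma sumr_mem_gt0 (R : numDomainType) (T : finType) (F : T -> R) (S : {set T}) a :
  (forall x, 0 < F x) -> a \in S -> 0 < \sum_(x in S) F x.
Proof.
move=> F_gt0 aS; rewrite (bigD1 a) //=; apply: lt_le_trans (F_gt0 a) _.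
by rewrite lerDl sumr_ge0 // => i _; rewrite ltW.
Qed.

Section PositiveSCF.
Variables (R : realType) (T : finType) (p : T -> {set T} -> R).
Hypothesis p_pos : positive_scf p.

Local Notation ratio A a b := (p a A / p b A).

Lemma scf_gt0 a (A : {set T}) : a \in A -> 0 < p a A.
Proof.
move=> aA; have A0 : A != set0 by apply/set0Pn; exists a.
by have [_ [_ ->]] := p_pos A0.
Qed.

Lemma scf_neq0 a (A : {set T}) : a \in A -> p a A != 0.
Proof. by move=> aA; rewrite gt_eqF // scf_gt0. Qed.

Lemma ratio_trans (A : {set T}) a b c : b \in A -> c \in A ->
  ratio A a b * ratio A b c = ratio A a c.
Proof. by move=> /scf_neq0 bA /scf_neq0 cA; field; rewrite bA cA. Qed.

Section Representation.
Variables (P : {set {set T}}) (u : T -> R) (v : {set T} -> R).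
Hypothesis rep : NSC_rep p P u v.

Definition usum (S : {set T}) := \sum_(c in S) u c.

Definition mass (S : {set T}) a := v S * (u a / usum S).

Definition total_mass (A : {set T}) := \sum_(X in P) v (A :&: X).

Lemma u_gt0 a : 0 < u a. Proof. by case: rep => _ []. Qed.

Lemma u_neq0 a : u a != 0. Proof. by rewrite gt_eqF ?u_gt0. Qed.

Lemma usum_gt0 (S : {set T}) a : a \in S -> 0 < usum S.
Proof. exact: sumr_mem_gt0 u_gt0. Qed.

Lemma usum_setU1 (S : {set T}) x : x \notin S -> usum (x |: S) = u x + usum S.
Proof. exact: big_setU1. Qed.

Lemma mass_set1 x : mass [set x] x = v [set x].
Proof. by rewrite /mass /usum big_set1 divff ?mulr1 ?u_neq0. Qed.

Lemma block_mem a : pblock P a \in P.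
Proof. by case: rep => [/cover_partition coverP _]; rewrite pblock_mem // coverP inE. Qed.

Lemma mem_block a : a \in pblock P a.
Proof. by case: rep => [/cover_partition coverP _]; rewrite mem_pblock coverP inE. Qed.

Lemma block_eq (X Y : {set T}) x :
  X \in P -> Y \in P -> x \in X -> x \in Y -> X = Y.
Proof.
case: rep => [/and3P[_ tiP _] _] XP YP xX xY.
by rewrite -(def_pblock tiP XP xX) -(def_pblock tiP YP xY).
Qed.

Lemma block_out (X Y : {set T}) x :
  X \in P -> Y \in P -> X != Y -> x \in X -> x \notin Y.
Proof. by move=> XP YP XY xX; apply: contraNN XY => /(block_eq XP YP xX) ->. Qed.

Lemma rep_scf (A X : {set T}) a : X \in P -> a \in A :&: X ->
  p a A = mass (A :&: X) a / total_mass A.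
Proof.
move=> XP aAX; have A0 : A != set0 by apply/set0Pn; exists a; case/setIP: aAX.
by case: rep => _ [_ [_ [_ F]]]; rewrite (F A A0 X XP a aAX) /mass mulrAC.
Qed.

Lemma mass_neq0 (A X : {set T}) a :
  a \in A -> X \in P -> a \in X -> mass (A :&: X) a != 0.
Proof.
move=> aA XP aX; have aAX : a \in A :&: X by rewrite inE aA aX.
by apply: contra_neq (scf_neq0 aA) => m0; rewrite (rep_scf XP aAX) m0 mul0r.
Qed.

Lemma v_neq0 (A X : {set T}) a : a \in A -> X \in P -> a \in X -> v (A :&: X) != 0.
Proof.
move=> aA XP aX; apply: contraNneq (mass_neq0 aA XP aX).
by rewrite /mass => ->; rewrite mul0r.
Qed.

Lemma rep_ratio (A X Y : {set T}) a b : a \in A -> b \in A ->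
  X \in P -> a \in X -> Y \in P -> b \in Y ->
  ratio A a b = mass (A :&: X) a / mass (A :&: Y) b.
Proof.
move=> aA bA XP aX YP bY.
have aAX : a \in A :&: X by rewrite inE aA aX.
have bAY : b \in A :&: Y by rewrite inE bA bY.
have Am0 : total_mass A != 0.
  by apply: contra_neq (scf_neq0 aA) => m0; rewrite (rep_scf XP aAX) m0 invr0 mulr0.
by rewrite (rep_scf XP aAX) (rep_scf YP bAY); field; rewrite Am0 (mass_neq0 bA YP bY).
Qed.

Lemma rep_ratio_block (A X : {set T}) a b : a \in A -> b \in A ->
  X \in P -> a \in X -> b \in X -> ratio A a b = u a / u b.
Proof.
move=> aA bA XP aX bX; rewrite (rep_ratio aA bA XP aX XP bX) /mass.
have vS := v_neq0 aA XP aX.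
have /gt_eqF Us : 0 < usum (A :&: X) by apply: (usum_gt0 (a := b)); rewrite inE bA bX.
by field; rewrite vS Us u_neq0.
Qed.

Lemma mass_degenerate (S : {set T}) a :
  usum S / v S = u a / v [set a] -> mass S a = v [set a].
Proof.
move=> E; have E' : v S / usum S = v [set a] / u a by rewrite -invf_div E invf_div.
by rewrite /mass mulrCA E' mulrCA divff ?mulr1 ?u_neq0.
Qed.

(* Both sides say that the ratio of [b] to [x] does not move when [a] joins
   the block of [x]. *)
Lemma pair_triple_iff (X Y : {set T}) a b x : X \in P -> Y \in P -> X != Y ->
  a \in X -> x \in X -> b \in Y -> a != x ->
  ratio [set b; x] b x = ratio [set a; b; x] b x <->
  (u a + u x) / u x = v [set a; x] / v [set x].
Proof.
move=> XP YP XY aX xX bY ax.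
have xY := block_out XP YP XY xX; have aY := block_out XP YP XY aX.
have bX : b \notin X by apply: (block_out YP XP) bY; rewrite eq_sym.
have bM : b \in [set a; b; x] by rewrite !inE eqxx !orbT.
have xM : x \in [set a; b; x] by rewrite !inE eqxx !orbT.
have bxY : [set b; x] :&: Y = [set b] by finset_cases; rewrite ?bY ?(negbTE xY) ?andbF.
have bxX : [set b; x] :&: X = [set x] by finset_cases; rewrite ?xX ?(negbTE bX) ?andbF.
have MY : [set a; b; x] :&: Y = [set b].
  by finset_cases; rewrite ?bY ?(negbTE aY) ?(negbTE xY) ?andbF ?orbF.
have MX : [set a; b; x] :&: X = [set a; x].
  by finset_cases; rewrite ?aX ?xX ?(negbTE bX) ?andbF ?orbF.
rewrite (rep_ratio (set21 b x) (set22 b x) YP bY XP xX) (rep_ratio bM xM YP bY XP xX).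
have vb := v_neq0 (set21 b x) YP bY; rewrite bxY in vb.
have vx := v_neq0 (set22 b x) XP xX; rewrite bxX in vx.
have vax := v_neq0 xM XP xX; rewrite MX in vax.
have uax : u a + u x != 0 by rewrite gt_eqF // addr_gt0 ?u_gt0.
rewrite bxY bxX MY MX !mass_set1 /mass /usum big_setU1 ?big_set1 ?inE //=.
split=> [/(mulfI vb)/invr_inj ->|E].
  by field; rewrite vax u_neq0 uax.
have -> : v [set a; x] = (u a + u x) / u x * v [set x] by rewrite E divfK.
by field; rewrite vx u_neq0 uax.
Qed.

Lemma mass_setU1_iff (S : {set T}) a x : a \in S -> x \notin S -> v S != 0 ->
  mass (x |: S) a = mass S a <-> (usum S + u x) / usum S = v (x |: S) / v S.
Proof.
move=> aS xS vS; have /gt_eqF US := usum_gt0 aS.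
have /gt_eqF UxS : 0 < u x + usum S by rewrite addr_gt0 ?u_gt0 ?(usum_gt0 aS).
rewrite /mass usum_setU1 //; split=> [E|E].
  have -> : v (x |: S) = v S * (u x + usum S) / usum S.
    apply: (mulIf (x := u a / (u x + usum S))).
      by rewrite mulf_neq0 ?u_neq0 ?invr_eq0 ?UxS.
    by rewrite E; field; rewrite US UxS.
  by field; rewrite vS US.
have -> : v (x |: S) = (usum S + u x) / usum S * v S by rewrite E divfK.
by field; rewrite US UxS.
Qed.

Lemma strict_rep_of_ISA1 : ISA1 p -> (forall a, exists b, b \notin pblock P a) ->
  strict_rep P u v.
Proof.
move=> I1 out X XP Ai AiX a x aAi /setDP[xX xAi] E.
have aX : a \in X by apply: (subsetP AiX).
have [b] := out a; rewrite -(block_eq XP (block_mem a) aX (mem_block a)) => bX.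
have YP := block_mem b; have bY := mem_block b; set Y := pblock P b in YP bY.
have XY : X != Y by apply: contraNneq bX => ->.
have ax : a != x by apply: contraNneq xAi => <-.
have xb : x != b by apply: contraNneq bX => <-.
set A := b |: Ai.
have A0 : A != set0 by apply/set0Pn; exists b; rewrite !inE eqxx.
have aA : a \in A by rewrite !inE aAi orbT.
have bA : b \in A by rewrite !inE eqxx.
have xA : x \notin A by rewrite !inE negb_or xb xAi.
have aM : a \in [set a; b; x] by rewrite !inE eqxx.
have xM : x \in [set a; b; x] by rewrite !inE eqxx !orbT.
have H1 : ratio [set a; x] a x = ratio [set a; b; x] a x.
  by rewrite (rep_ratio_block (set21 a x) (set22 a x) XP aX xX)
             (rep_ratio_block aM xM XP aX xX).
have H2 := (pair_triple_iff XP YP XY aX xX bY ax).2 E.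
have := I1 A a b x A0 aA bA xA H1 H2.
have xaA : a \in x |: A by rewrite in_setU1 aA orbT.
have xbA : b \in x |: A by rewrite in_setU1 bA orbT.
rewrite (rep_ratio aA bA XP aX YP bY) (rep_ratio xaA xbA XP aX YP bY).
rewrite [(x |: A) :&: Y]setIU1_out ?(block_out XP YP XY xX) //.
move=> /(congr1 (fun t => t * mass (A :&: Y) b)); rewrite !divfK ?mass_neq0 // => C.
have AX : A :&: X = Ai by rewrite setIU1_out //; apply/setIidPl.
rewrite setIU1_in // AX in C.
have vAi := v_neq0 aA XP aX; rewrite AX in vAi.
exact: (mass_setU1_iff aAi xAi vAi).1 (esym C).
Qed.

Section Strict.
Hypothesis strict : strict_rep P u v.

Lemma mass_extend (A X Y : {set T}) a b x : X \in P -> Y \in P -> X != Y ->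
  a \in A -> a \in X -> x \in X -> x \notin A -> b \in Y ->
  ratio [set b; x] b x = ratio [set a; b; x] b x ->
  mass ((x |: A) :&: X) a = mass (A :&: X) a.
Proof.
move=> XP YP XY aA aX xX xA bY E.
have ax : a != x by apply: contraNneq xA => <-.
have aS : a \in A :&: X by rewrite inE aA aX.
have xS : x \notin A :&: X by rewrite inE (negbTE xA).
have xXS : x \in X :\: (A :&: X) by rewrite inE xS xX.
have E' := (pair_triple_iff XP YP XY aX xX bY ax).1 E.
have St := strict XP (subsetIr A X) aS xXS E'.
by rewrite setIU1_in //; apply/(mass_setU1_iff aS xS (v_neq0 aA XP aX)).
Qed.

Lemma rep_ISA1 : ISA1 p.
Proof.
move=> A a b x A0 aA bA xA H1 H2.
have xaA : a \in x |: A by rewrite !inE aA orbT.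
have xbA : b \in x |: A by rewrite !inE bA orbT.
have XP := block_mem a; have aX := mem_block a; set X := pblock P a in XP aX.
have YP := block_mem b; have bY := mem_block b; set Y := pblock P b in YP bY.
have [XY|XY] := eqVneq X Y.
  have bX : b \in X by rewrite XY.
  by rewrite (rep_ratio_block aA bA XP aX bX) (rep_ratio_block xaA xbA XP aX bX).
rewrite (rep_ratio aA bA XP aX YP bY) (rep_ratio xaA xbA XP aX YP bY).
have [xX|xX] := boolP (x \in X).
  rewrite [(x |: A) :&: Y]setIU1_out ?(block_out XP YP XY xX) //.
  by rewrite (mass_extend XP YP XY aA aX xX xA bY H2).
have [xY|xY] := boolP (x \in Y); last by rewrite !setIU1_out.
rewrite [(x |: A) :&: X]setIU1_out // (mass_extend YP XP _ bA bY xY xA aX) 1?eq_sym //.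
by rewrite (_ : [set b; a; x] = [set a; b; x]) //; finset_cases.
Qed.

End Strict.

Lemma rep_ISA2 : ISA2 p.
Proof.
move=> A B C a b x A0 B0 C0 /setIP[aA aB] /setIP[bA bC] /setIP[xB xC] Ha Hb.
have [xA|xA] := boolP (x \in A); first by rewrite (setUidPr _) // sub1set.
have xaA : a \in x |: A by rewrite !inE aA orbT.
have xbA : b \in x |: A by rewrite !inE bA orbT.
have XP := block_mem a; have aX := mem_block a; set X := pblock P a in XP aX.
have YP := block_mem b; have bY := mem_block b; set Y := pblock P b in YP bY.
have xX : x \notin X.
  apply: contra_notN Ha => xX.
  by rewrite (rep_ratio_block (set21 a x) (set22 a x) XP aX xX)
             (rep_ratio_block aB xB XP aX xX).
have xY : x \notin Y.
  apply: contra_notN Hb => xY.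
  by rewrite (rep_ratio_block (set21 b x) (set22 b x) YP bY xY)
             (rep_ratio_block bC xC YP bY xY).
by rewrite (rep_ratio aA bA XP aX YP bY) (rep_ratio xaA xbA XP aX YP bY) !setIU1_out.
Qed.

End Representation.

Section FromAxioms.
Hypotheses (I1 : ISA1 p) (I2 : ISA2 p).

Definition simpb a b := [forall A : {set T},
  (A != set0) && (a \in A) && (b \in A) ==> (ratio A a b == ratio [set a; b] a b)].

Lemma simpbP a b : reflect (simp p a b) (simpb a b).
Proof.
apply: (iffP forallP) => [H A A0 aA bA | H A].
  by have /implyP/(_ _)/eqP := H A; apply; rewrite A0 aA bA.
by apply/implyP => /andP[/andP[A0 aA] bA]; apply/eqP; apply: H.
Qed.

Lemma simpb_ratio a b (A : {set T}) : simpb a b -> a \in A -> b \in A ->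
  ratio A a b = ratio [set a; b] a b.
Proof. by move=> /simpbP ab aA bA; apply: ab => //; apply/set0Pn; exists a. Qed.

Lemma simpb_refl a : simpb a a.
Proof. by apply/simpbP => A A0 aA _; rewrite !divff // scf_neq0 // set21. Qed.

Lemma simpb_sym a b : simpb a b -> simpb b a.
Proof.
move=> ab; apply/simpbP => A A0 bA aA.
by rewrite -[LHS]invf_div (simpb_ratio ab aA bA) invf_div setUC.
Qed.

Lemma simpb_trans a b c : simpb a b -> simpb b c -> simpb a c.
Proof.
move=> ab bc.
have via_b (A : {set T}) : a \in A -> c \in A -> b \in A ->
    ratio A a c = ratio [set a; b] a b * ratio [set b; c] b c.
  move=> aA cA bA.
  by rewrite -(ratio_trans a bA cA) (simpb_ratio ab aA bA) (simpb_ratio bc bA cA).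
have {}via_b (A : {set T}) : a \in A -> c \in A ->
    ratio A a c = ratio [set a; b] a b * ratio [set b; c] b c.
  move=> aA cA; have [bA|bA] := boolP (b \in A); first exact: via_b.
  (* Otherwise ISA1 lets [b] join [A]: it is related to both [a] and [c]. *)
  have A0 : A != set0 by apply/set0Pn; exists a.
  have aM : a \in [set a; c; b] by rewrite !inE eqxx.
  have bM : b \in [set a; c; b] by rewrite !inE eqxx !orbT.
  have cM : c \in [set a; c; b] by rewrite !inE eqxx !orbT.
  rewrite (I1 A0 aA cA bA) ?(simpb_ratio ab aM bM) ?(simpb_ratio (simpb_sym bc) cM bM) //.
  by apply: via_b; rewrite !inE ?aA ?cA ?eqxx ?orbT.
apply/simpbP => A A0 aA cA.
by rewrite (via_b A aA cA) (via_b _ (set21 a c) (set22 a c)).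
Qed.

Lemma simpb_equiv : {in [set: T] & &, equivalence_rel simpb}.
Proof.
move=> x y z _ _ _; split; first exact: simpb_refl.
by move=> xy; apply/idP/idP; [apply: simpb_trans (simpb_sym xy) | apply: simpb_trans].
Qed.

Definition cls a := [set y | simpb a y].

Lemma cls_eq a b : simpb a b -> cls b = cls a.
Proof.
move=> ab; apply/setP => y; rewrite !inE.
by apply/idP/idP; [apply: simpb_trans | apply: simpb_trans (simpb_sym ab)].
Qed.

Lemma unrelated_witness a x : ~~ simpb a x -> exists B : {set T},
  [/\ B != set0, a \in B, x \in B & ratio [set a; x] a x <> ratio B a x].
Proof.
move/forallPn=> [B]; rewrite negb_imply => /andP[/andP[/andP[B0 aB] xB] /eqP ne].
by exists B; split => // E; apply: ne.
Qed.

Lemma ratio_setU1_unrelated (A : {set T}) a b x : ~~ simpb a x -> ~~ simpb b x ->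
  a \in A -> b \in A -> ratio (x |: A) a b = ratio A a b.
Proof.
move=> ax bx aA bA.
have [B [B0 aB xB neB]] := unrelated_witness ax.
have [C [C0 bC xC neC]] := unrelated_witness bx.
have A0 : A != set0 by apply/set0Pn; exists a.
by apply/esym; apply: (I2 (B := B) (C := C)); rewrite ?inE ?aA ?aB ?bA ?bC ?xB ?xC.
Qed.

Lemma ratio_setU_unrelated (A D : {set T}) a b : a \in A -> b \in A ->
  (forall y, y \in D -> ~~ simpb a y && ~~ simpb b y) ->
  ratio (A :|: D) a b = ratio A a b.
Proof.
move=> aA bA; have [n] := ubnP #|D|; elim: n D => // n IH D /ltnSE leDn HD.
have [-> | [y yD]] := set_0Vmem D; first by rewrite setU0.
have /andP[ay yb] := HD y yD.
rewrite -(setD1K yD) setUCA ratio_setU1_unrelated // ?inE ?aA ?bA //.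
apply: IH => [|z /setD1P[_ /HD] //].
by move: leDn; rewrite (cardsD1 y D) yD.
Qed.

(* Both menus are compared with [A :&: A'], which differs from each of them by
   alternatives unrelated to [a] and [b]. *)
Lemma ratio_restrict (A A' : {set T}) a b :
  a \in A -> b \in A -> a \in A' -> b \in A' ->
  (forall y, simpb a y || simpb b y -> (y \in A) = (y \in A')) ->
  ratio A a b = ratio A' a b.
Proof.
move=> aA bA aA' bA' AA'.
have toI (X Y : {set T}) : a \in X -> b \in X -> a \in Y -> b \in Y ->
    (forall y, simpb a y || simpb b y -> (y \in X) = (y \in Y)) ->
    ratio X a b = ratio (X :&: Y) a b.
  move=> aX bX aY bY XY.
  rewrite -{1 2}(setID X Y) ratio_setU_unrelated ?inE ?aX ?aY ?bX ?bY // => y.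
  move=> /setDP[yX yY]; rewrite -negb_or.
  by apply: contra yY => /XY <-.
by rewrite (toI A A') // (toI A' A) 1?setIC // => y /AA' ->.
Qed.

Section ThreeClasses.
Hypothesis three : exists a b c, ~ simp p a b /\ ~ simp p b c /\ ~ simp p a c.

Lemma unrelated_to_both a b : exists e, ~~ simpb a e && ~~ simpb b e.
Proof.
(* [a] and [b] are each related to at most one of three unrelated alternatives. *)
have [x [y [z [/simpbP xy [/simpbP yz /simpbP xz]]]]] := three.
have link c t t' : simpb c t -> simpb c t' -> simpb t t'.
  by move=> ct ct'; apply: simpb_trans (simpb_sym ct) ct'.
have [Hx|Hx] := boolP (~~ simpb a x && ~~ simpb b x); first by exists x.
have [Hy|Hy] := boolP (~~ simpb a y && ~~ simpb b y); first by exists y.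
have [Hz|Hz] := boolP (~~ simpb a z && ~~ simpb b z); first by exists z.
exfalso; move: Hx Hy Hz; rewrite -!negb_or !negbK.
case/orP=> Hx; case/orP=> Hy; case/orP=> Hz.
all: first [ by move: xy; rewrite (link _ _ _ Hx Hy)
           | by move: yz; rewrite (link _ _ _ Hy Hz)
           | by move: xz; rewrite (link _ _ _ Hx Hz) ].
Qed.

Definition outsider a := odflt a [pick e | ~~ simpb a e].

Lemma outsiderP a : ~~ simpb a (outsider a).
Proof.
rewrite /outsider; case: pickP => [e //|none].
by have [e /andP[ae _]] := unrelated_to_both a a; move: (none e); rewrite ae.
Qed.

Definition pad a (S : {set T}) := S :|: ~: cls a.

Lemma mem_pad_unrelated a S y : ~~ simpb a y -> y \in pad a S.
Proof. by move=> ay; rewrite !inE ay orbT. Qed.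

(* In an NSC representation, [revealed a S] is [v S * u a / U S] divided by the
   total mass of the grand menu: this is how [v] is read off [p]. *)
Definition revealed a (S : {set T}) :=
  ratio (pad a S) a (outsider a) * p (outsider a) [set: T].

Lemma revealed_any a (S : {set T}) e : a \in S -> ~~ simpb a e ->
  revealed a S = ratio (pad a S) a e * p e [set: T].
Proof.
move=> aS ae; rewrite /revealed; set e0 := outsider a.
have ae0 : ~~ simpb a e0 := outsiderP a.
have eM := mem_pad_unrelated S ae; have e0M := mem_pad_unrelated S ae0.
rewrite -(ratio_trans a eM e0M).
rewrite (@ratio_restrict _ [set: T] e e0) ?in_setT // => [|y ey].
  by field; rewrite !scf_neq0 ?in_setT.
rewrite in_setT mem_pad_unrelated //; apply/negP => ay.
by case/orP: ey => ey; [move: ae | move: ae0]; rewrite (simpb_trans ay (simpb_sym ey)).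
Qed.

Lemma revealed_gt0 a (S : {set T}) : a \in S -> 0 < revealed a S.
Proof.
move=> aS; rewrite /revealed mulr_gt0 ?divr_gt0 ?scf_gt0 ?in_setT //.
  by rewrite inE aS.
exact/mem_pad_unrelated/outsiderP.
Qed.

Definition u_cls a := p a (cls a).

Lemma u_cls_gt0 a : 0 < u_cls a.
Proof. by rewrite scf_gt0 // inE simpb_refl. Qed.

Lemma ratio_same_class (A : {set T}) a b : simpb a b -> a \in A -> b \in A ->
  ratio A a b = u_cls a / u_cls b.
Proof.
move=> ab aA bA; rewrite (simpb_ratio ab aA bA) /u_cls (cls_eq ab).
by rewrite (simpb_ratio ab (A := cls a)) // inE ?simpb_refl.
Qed.

Lemma revealed_same_class a a' (S : {set T}) : simpb a a' -> a \in S -> a' \in S ->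
  revealed a S / revealed a' S = u_cls a / u_cls a'.
Proof.
move=> aa' aS a'S; set e := outsider a.
have ae : ~~ simpb a e := outsiderP a.
have a'e : ~~ simpb a' e by apply: contra ae => /(simpb_trans aa').
rewrite (revealed_any aS ae) (revealed_any a'S a'e) /pad (cls_eq aa') -/(pad a S).
have eM := mem_pad_unrelated S ae.
have aM : a \in pad a S by rewrite inE aS.
have a'M : a' \in pad a S by rewrite inE a'S.
rewrite -(ratio_same_class aa' aM a'M).
by field; rewrite !scf_neq0 ?in_setT.
Qed.

Lemma ratio_revealed (N : {set T}) c e : ~~ simpb c e -> c \in N ->
  (forall y, simpb e y -> y \in N) ->
  ratio N c e = revealed c (N :&: cls c) / p e [set: T].
Proof.
move=> ce cN eN; have cS : c \in N :&: cls c by rewrite !inE cN simpb_refl.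
rewrite (revealed_any cS ce) mulfK ?scf_neq0 ?in_setT //.
apply: ratio_restrict => //; first exact/eN/simpb_refl.
- by rewrite inE cS.
- exact: mem_pad_unrelated.
move=> y /orP[cy|ey]; first by rewrite !inE cy /= orbF andbT.
rewrite eN // mem_pad_unrelated //; apply: contra ce => cy.
exact: simpb_trans cy (simpb_sym ey).
Qed.

(* Compare [a] and [b] through a third class, shrinking the menu with ISA2 so
   that the two comparisons live in the same menu. *)
Lemma ratio_cross_class (A : {set T}) a b : a \in A -> b \in A -> ~~ simpb a b ->
  ratio A a b = revealed a (A :&: cls a) / revealed b (A :&: cls b).
Proof.
move=> aA bA ab; have [e /andP[ae be]] := unrelated_to_both a b.
set N := (A :&: (cls a :|: cls b)) :|: [set y | ~~ simpb a y && ~~ simpb b y].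
have NA y : simpb a y || simpb b y -> (y \in N) = (y \in A).
  by move=> aby; rewrite !inE -negb_or aby andbT orbF.
have NclsA c : simpb a c || simpb b c -> N :&: cls c = A :&: cls c.
  move=> abc; apply/setP => y; rewrite !in_setI [y \in cls c]inE.
  case cy: (simpb c y); rewrite ?andbF // !andbT NA //.
  by case/orP: abc => [ac|bc]; apply/orP; [left|right]; apply: simpb_trans cy.
have eN y : simpb e y -> y \in N.
  move=> ey; have unrel c : ~~ simpb c e -> ~~ simpb c y.
    by apply: contra => cy; apply: simpb_trans cy (simpb_sym ey).
  by rewrite !inE (unrel a ae) (unrel b be) orbT.
have aN : a \in N by rewrite NA ?simpb_refl.
have bN : b \in N by rewrite NA ?simpb_refl ?orbT.
have eN' : e \in N by apply/eN/simpb_refl.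
rewrite (@ratio_restrict A N a b) // => [|y /NA ->] //.
have -> : ratio N a b = ratio N a e / ratio N b e by field; rewrite !scf_neq0.
rewrite !ratio_revealed // (NclsA a) ?simpb_refl // (NclsA b) ?simpb_refl ?orbT //.
have bS : b \in A :&: cls b by rewrite !inE bA simpb_refl.
by field; rewrite lt0r_neq0 ?revealed_gt0 // scf_neq0 ?in_setT.
Qed.

Definition P_cls := equivalence_partition simpb [set: T].

Definition v_cls (S : {set T}) := \sum_(b in S) revealed b S.

Lemma P_cls_partition : partition P_cls [set: T].
Proof. exact: equivalence_partitionP simpb_equiv. Qed.

Lemma P_cls_eq (X : {set T}) a : X \in P_cls -> a \in X -> X = cls a.
Proof.
move=> XP aX; have /and3P[_ tiP _] := P_cls_partition.
rewrite -(def_pblock tiP XP aX); apply/setP => y.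
by rewrite inE pblock_equivalence_partition ?in_setT //; exact: simpb_equiv.
Qed.

Lemma revealed_proportional (A : {set T}) a b : a \in A -> b \in A ->
  revealed b (A :&: cls b) = p b A * (revealed a (A :&: cls a) / p a A).
Proof.
move=> aA bA; have aS : a \in A :&: cls a by rewrite !inE aA simpb_refl.
have /lt0r_neq0 ra := revealed_gt0 aS.
have [ab|ab] := boolP (simpb a b).
  have bS : b \in A :&: cls a by rewrite !inE bA.
  rewrite (cls_eq ab) -[LHS](divfK ra) (revealed_same_class (simpb_sym ab) bS aS).
  by rewrite -(ratio_same_class (simpb_sym ab) bA aA); field; rewrite scf_neq0.
have ba : ~~ simpb b a by apply: contra ab; apply: simpb_sym.
by rewrite -[LHS](divfK ra) -(ratio_cross_class bA aA ba); field; rewrite scf_neq0.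
Qed.

Lemma sum_v_cls (A : {set T}) :
  \sum_(X in P_cls) v_cls (A :&: X) = \sum_(b in A) revealed b (A :&: cls b).
Proof.
transitivity
  (\sum_(X in P_cls) \sum_(b in X) (if b \in A then revealed b (A :&: cls b) else 0)).
  apply: eq_bigr => X XP; rewrite /v_cls -big_mkcondr /=.
  apply: eq_big => [b|b]; first by rewrite inE andbC.
  by rewrite inE => /andP[_ bX]; rewrite -(P_cls_eq XP bX).
rewrite -(set_partition_big _ P_cls_partition) -big_mkcondr /=.
by apply: eq_bigl => b; rewrite in_setT.
Qed.

Lemma v_cls_class (S : {set T}) a : a \in S -> S \subset cls a ->
  v_cls S = revealed a S / u_cls a * \sum_(b in S) u_cls b.
Proof.
move=> aS Sa; rewrite /v_cls mulr_sumr; apply: eq_bigr => b bS.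
have ab : simpb a b by have := subsetP Sa b bS; rewrite inE.
have /lt0r_neq0 ra := revealed_gt0 aS.
rewrite -[LHS](divfK ra) (revealed_same_class (simpb_sym ab) bS aS).
by field; rewrite gt_eqF ?u_cls_gt0.
Qed.

Lemma NSC_rep_cls : NSC_rep p P_cls u_cls v_cls.
Proof.
split; first exact: P_cls_partition.
split; first exact: u_cls_gt0.
split; first by rewrite /v_cls big_set0.
split; first by move=> S _; apply: sumr_ge0 => b bS; exact/ltW/revealed_gt0.
move=> A A0 X XP a /setIP[aA aX]; rewrite (P_cls_eq XP aX).
set S := A :&: cls a; have aS : a \in S by rewrite !inE aA simpb_refl.
have -> : \sum_(Xj in P_cls) v_cls (A :&: Xj) = revealed a S / p a A.
  rewrite sum_v_cls (eq_bigr _ (fun b bA => revealed_proportional aA bA)) -mulr_suml.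
  by have [_ [-> _]] := p_pos A0; rewrite mul1r.
rewrite (v_cls_class aS (subsetIr _ _)).
have /lt0r_neq0 ra := revealed_gt0 aS.
have /lt0r_neq0 US := sumr_mem_gt0 u_cls_gt0 aS.
by field; rewrite US ra scf_neq0 // lt0r_neq0 ?u_cls_gt0.
Qed.

Lemma nondegenerate_cls : Defs.nondegenerate P_cls u_cls v_cls.
Proof.
move=> Xi Xj XiP XjP [a aXi Ha] [b bXj Hb].
suff ab : simpb a b by rewrite (P_cls_eq XiP aXi) (P_cls_eq XjP bXj) (cls_eq ab).
apply/simpbP => A A0 aA bA.
rewrite (rep_ratio NSC_rep_cls aA bA XiP aXi XjP bXj).
rewrite (rep_ratio NSC_rep_cls (set21 a b) (set22 a b) XiP aXi XjP bXj).
rewrite !(mass_degenerate NSC_rep_cls) //; apply: Ha || apply: Hb;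
  by rewrite ?subsetIr // inE ?aA ?bA ?aXi ?bXj ?set21 ?set22.
Qed.

Lemma strict_rep_cls : strict_rep P_cls u_cls v_cls.
Proof.
apply: (strict_rep_of_ISA1 NSC_rep_cls I1) => a.
have [b /andP[ab _]] := unrelated_to_both a a; exists b.
by rewrite (P_cls_eq (block_mem NSC_rep_cls a) (mem_block NSC_rep_cls a)) inE.
Qed.

End ThreeClasses.
End FromAxioms.
End PositiveSCF.

Theorem theorem5 (R : realType) (T : finType) (p : T -> {set T} -> R) :
  positive_scf p ->
  (exists a b c : T, ~ simp p a b /\ ~ simp p b c /\ ~ simp p a c) ->
  (ISA1 p /\ ISA2 p <-> strict_nondeg_NSC p).
Proof.
move=> p_pos three; split => [[I1 I2] | [P [u [v [rep [_ strict]]]]]].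
  exists (P_cls p), (u_cls p), (v_cls p).
  split; first exact: NSC_rep_cls.
  by split; [exact: nondegenerate_cls | exact: strict_rep_cls].
by split; [exact: rep_ISA1 strict | exact: rep_ISA2 rep].
Qed.
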